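(* Let $\mathcal{I}$ be the input simplicial model, $\langle\mathcal{I},\mathcal{P},\Psi\rangle$ a simplicial protocol and $\langle\mathcal{I},\mathcal{O},\Delta\rangle$ a simplicial task, and let $\mathbf{P}=\kappa(\langle\mathcal{I},\mathcal{P},\Psi\rangle)$ and $\mathbf{T}=\kappa(\langle\mathcal{I},\mathcal{O},\Delta\rangle)$. If there exists a morphism of partial epistemic models $\delta_{\mathrm{krip}}:\mathcal{I}[\![\mathbf{P}]\!]\to\mathcal{I}[\![\mathbf{T}]\!]$ such that for every world $(E,p)$ of $\mathcal{I}[\![\mathbf{P}]\!]$ there exists $(E',t)\in\delta_{\mathrm{krip}}((E,p))$ with $E\subseteq E'$, then there exists a chromatic simplicial map $\delta_{\mathrm{top}}:\mathcal{P}\to\mathcal{O}$ such that for every $X\in\mathcal{F}(\mathcal{I})$ and every $Y\in\Psi(X)$ there is $Z\in\Delta(X)$ with $\delta_{\mathrm{top}}(Y)\subseteq Z$.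
   Context: Agents $\mathsf{Ag}=\{0,\dots,n-1\}$, $n>1$; $\mathsf{Value}=\mathsf{Ag}$; atoms $\mathsf{At}_a=\{\mathrm{input}_a^v\mid v\in\mathsf{Value}\}$, $\mathsf{At}_B=\bigcup_{a\in B}\mathsf{At}_a$. A chromatic simplicial complex $\langle V,S,\chi\rangle$ here has a finite vertex set $V\subseteq\mathsf{Ag}\times\mathsf{Value}$, coloring $\chi((a,v))=a$, and a set $S$ of nonempty subsets of $V$ closed under nonempty subsets, in which distinct vertices of a simplex have distinct colors; facets are maximal simplices, $\mathcal{F}(\mathcal{C})$ the set of facets, $\chi(X)=\{\chi(v)\mid v\in X\}$. A chromatic simplicial map $\mathcal{C}\to\mathcal{C}'$ is a color-preserving vertex map sending simplices to simplices. The input simplicial model $\mathcal{I}$ has vertices $\mathsf{Ag}\times\mathsf{Value}$ and simplices all nonempty subsets of sets $\{(0,v_0),\dots,(n-1,v_{n-1})\}$; facets labeled $\ell^{\mathcal{I}}(X)=\{\mathrm{input}_a^v\mid(a,v)\in X\}$; as a partial epistemic model its worlds are its facets, $X\sim_aY$ iff $a\in\chi(X\cap Y)$, labels $\ell^{\mathcal{I}}$. A facet map $\Theta:\mathcal{F}(\mathcal{C})\to\mathcal{P}(\mathcal{F}(\mathcal{D}))$ satisfies $\bigcup_{Y\in\Theta(X)}\chi(Y)\subseteq\chi(X)$ and $\mathcal{F}(\mathcal{D})=\bigcup_X\Theta(X)$. A simplicial task $\langle\mathcal{I},\mathcal{O},\Delta\rangle$: a complex $\mathcal{O}$ and facet map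 $\Delta:\mathcal{F}(\mathcal{I})\to\mathcal{P}(\mathcal{F}(\mathcal{O}))$. A simplicial protocol $\langle\mathcal{I},\mathcal{P},\Psi\rangle$: a complex $\mathcal{P}$ and facet map $\Psi$ with $\chi(Y\cap Y')\subseteq\chi(X\cap X')$ whenever $Y\in\Psi(X)$, $Y'\in\Psi(X')$. Translation $\kappa(\langle\mathcal{I},\mathcal{D},\Theta\rangle)$: action model with actions $\mathcal{F}(\mathcal{D})$, $Y\sim_aY'$ iff $a\in\chi(Y\cap Y')$, $\mathsf{pre}(Y)=\bigvee\{\bigwedge\ell^{\mathcal{I}}(X)\mid Y\in\Theta(X)\}$. Partial epistemic models $\langle W,\sim,L\rangle$: $W$ finite, $\sim_a$ symmetric transitive, $L:W\to\mathcal{P}(\mathsf{At})$; $\mathrm{Alive}(w)=\{a\mid w\sim_aw\}$; $w\sim_Aw'$ means $w\sim_aw'$ for all $a\in A$; epistemic formulas with $K_a$ interpreted over $\sim_a$. Partial product update $\mathcal{I}[\![\mathbf{A}]\!]$: with $\langle X\rangle_t=\{Y\mid X\sim^{\mathcal{I}}_{\mathrm{Alive}(t)}Y,\ \mathcal{I},Y\models\mathsf{pre}(t)\}$, worlds $(\langle X\rangle_t,t)$ with $\mathrm{Alive}(t)\subseteq\mathrm{Alive}(X)$, $\mathcal{I},X\models\mathsf{pre}(t)$; $(\langle X\rangle_t,t)\sim_a(\langle Y\rangle_s,s)$ iff $X\sim^{\mathcal{I}}_aY$ and $t\sim_as$; label $\bigcap_{X'\in\langle X\rangle_t}\ell^{\mathcal{I}}(X')$.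 A morphism $f:\langle W,\sim,L\rangle\to\langle W',\sim',L'\rangle$ is $f:W\to\mathcal{P}(W')$ with: (i) $w\sim_aw'$ implies $u\sim'_au'$ for all $u\in f(w),u'\in f(w')$; (ii) each $w$ has some $w'\in f(w)$ with $f(w)=\{u\mid w'\sim'_{\mathrm{Alive}(w)}u\}$; (iii) $L(w)\cap\mathsf{At}_{\mathrm{Alive}(w)}=L'(w')\cap\mathsf{At}_{\mathrm{Alive}(w)}$ for $w'\in f(w)$. *)

From mathcomp Require Import all_boot.
Set Implicit Arguments. Unset Strict Implicit. Unset Printing Implicit Defensive.

Section Defs.
Variable n : nat.

(* agents = values = 'I_n ; a vertex (a,v) has colour a ; the atom input_a^v
   is encoded by the pair (a,v), so an atom set is a {set vert}. *)
Definition vert := ('I_n * 'I_n)%type.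
Definition simplex := {set vert}.

Definition colors (X : simplex) : {set 'I_n} := [set v.1 | v in X].
Definition chromatic (X : simplex) : bool :=
  [forall u in X, forall v in X, (u.1 == v.1) ==> (u == v)].

Definition is_complex (V : {set vert}) (S : {set simplex}) : Prop :=
  (forall X, X \in S -> [/\ X != set0, X \subset V & chromatic X]) /\
  (forall X Y, X \in S -> Y != set0 -> Y \subset X -> Y \in S) /\
  (forall v, v \in V -> [set v] \in S).

Definition facets (S : {set simplex}) : {set simplex} :=
  [set X in S | [forall Y in S, (X \subset Y) ==> (Y == X)]].

Definition chromatic_map (V : {set vert}) (S : {set simplex})
  (V' : {set vert}) (S' : {set simplex}) (d : vert -> vert) : Prop :=
  (forall v, v \in V -> d v \in V' /\ (d v).1 = v.1) /\
  (forall X, X \in S -> d @: X \in S').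

Definition VI : {set vert} := setT.
Definition SI : {set simplex} := [set X | (X != set0) && chromatic X].
Definition FI : {set simplex} := facets SI.

Definition is_facet_map (SC SD : {set simplex})
  (Th : simplex -> {set simplex}) : Prop :=
  (forall X, X \in facets SC -> Th X \subset facets SD) /\
  (forall X Y, X \in facets SC -> Y \in Th X -> colors Y \subset colors X) /\
  (facets SD = \bigcup_(X in facets SC) Th X).

Definition is_task (VO : {set vert}) (SO : {set simplex})
  (De : simplex -> {set simplex}) : Prop :=
  is_complex VO SO /\ is_facet_map SI SO De.

Definition is_protocol (VP : {set vert}) (SP : {set simplex})
  (Ps : simplex -> {set simplex}) : Prop :=
  is_complex VP SP /\ is_facet_map SI SP Ps /\
  (forall X X' Y Y', X \in FI -> X' \in FI -> Y \in Ps X -> Y' \in Ps X' ->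
     colors (Y :&: Y') \subset colors (X :&: X')).

Definition alive (W : finType) (acc : 'I_n -> rel W) (w : W) : {set 'I_n} :=
  [set a | acc a w w].
Definition accA (W : finType) (acc : 'I_n -> rel W) (A : {set 'I_n}) (w w' : W)
  : bool := [forall a in A, acc a w w'].
Definition atomsOf (A : {set 'I_n}) : {set vert} := [set p | p.1 \in A].

Definition is_morphism (W1 W2 : finType)
  (acc1 : 'I_n -> rel W1) (L1 : W1 -> {set vert})
  (acc2 : 'I_n -> rel W2) (L2 : W2 -> {set vert})
  (f : W1 -> {set W2}) : Prop :=
  [/\ (forall a w w', acc1 a w w' ->
         forall u u', u \in f w -> u' \in f w' -> acc2 a u u'),
      (forall w, exists2 w', w' \in f w &
         f w = [set u | accA acc2 (alive acc1 w) w' u]) &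
      (forall w w', w' \in f w ->
         L1 w :&: atomsOf (alive acc1 w) = L2 w' :&: atomsOf (alive acc1 w))].

Definition accI (a : 'I_n) (X Y : simplex) : bool := a \in colors (X :&: Y).
Definition accIA (A : {set 'I_n}) (X Y : simplex) : bool :=
  [forall a in A, accI a X Y].
Definition aliveI (X : simplex) : {set 'I_n} := [set a | accI a X X].
Definition accAct (a : 'I_n) (t s : simplex) : bool := a \in colors (t :&: s).
Definition aliveAct (t : simplex) : {set 'I_n} := [set a | accAct a t t].

(* I, Y |= pre(t), where pre(t) = \/ { /\ l(X) | t \in Th(X) } and the
   label of a facet X of I is l(X) = X (as a set of atoms) *)
Definition preSat (Th : simplex -> {set simplex}) (t Y : simplex) : bool :=
  [exists X in FI, (t \in Th X) && (X \subset Y)].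

Definition cls (Th : simplex -> {set simplex}) (X t : simplex) : {set simplex} :=
  [set Y in FI | accIA (aliveAct t) X Y && preSat Th t Y].

(* X is a legitimate representative giving the world (<X>_t, t) *)
Definition isRep (SD : {set simplex}) (Th : simplex -> {set simplex})
  (X t : simplex) : bool :=
  [&& X \in FI, t \in facets SD, aliveAct t \subset aliveI X & preSat Th t X].

Definition isWorld (SD : {set simplex}) (Th : simplex -> {set simplex})
  (w : {set simplex} * simplex) : bool :=
  [exists X, isRep SD Th X w.2 && (w.1 == cls Th X w.2)].

Definition puW (SD : {set simplex}) (Th : simplex -> {set simplex}) : finType :=
  {w : {set simplex} * simplex | isWorld SD Th w}.

Definition puAcc (SD : {set simplex}) (Th : simplex -> {set simplex})
  (a : 'I_n) : rel (puW SD Th) := fun w w' =>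
  [exists X, exists Y,
     [&& isRep SD Th X (val w).2, isRep SD Th Y (val w').2,
         (val w).1 == cls Th X (val w).2, (val w').1 == cls Th Y (val w').2,
         accI a X Y & accAct a (val w).2 (val w').2]].

Definition puLab (SD : {set simplex}) (Th : simplex -> {set simplex})
  (w : puW SD Th) : {set vert} := \bigcap_(X in (val w).1) X.

End Defs.

(* A world of I[[P]] is a facet of P together with the input facets that can
   produce it, and two worlds are a-related as soon as their protocol facets
   share a vertex of colour a (this is where the protocol's colour condition
   enters).  A morphism preserves a-relatedness, so the task facets of all the
   images of all worlds through a protocol vertex v pairwise share a vertex of
   colour v.1, and by chromaticity it is one and the same vertex: this is the
   decision d v.  Simplices of P lie in some world's facet, so d is simplicial;
   the inclusion E ⊆ E' of the hypothesis puts the input facet X in the class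
   of the image world, which forces its task facet into Δ(X). *)
From mathcomp Require Import all_boot.
Set Implicit Arguments. Unset Strict Implicit. Unset Printing Implicit Defensive.

Section Facets.
Variable n : nat.
Implicit Types (S : {set simplex n}) (X Y : simplex n).

Lemma facet_maximal S X Y : X \in facets S -> Y \in S -> X \subset Y -> Y = X.
Proof.
rewrite inE => /andP[_ /forallP maxX] YS XY.
by have /implyP/(_ YS)/implyP/(_ XY)/eqP := maxX Y.
Qed.

Lemma facets_sub S : facets S \subset S.
Proof. by apply/subsetP => X; rewrite inE => /andP[]. Qed.

Lemma facet_sup S X : X \in S -> exists2 Y, Y \in facets S & X \subset Y.
Proof.
move=> XS; have [Y /maxsetP[YS Ymax] XY] := maxset_exists (P := fun B => B \in S) XS.
exists Y => //; rewrite inE YS; apply/forallP => Z; apply/implyP => ZS.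
by apply/implyP => YZ; apply/eqP; apply: Ymax.
Qed.

Lemma colorsP X a : reflect (exists2 v, v \in X & v.1 = a) (a \in colors X).
Proof. by apply: (iffP imsetP) => [[v vX ->]|[v vX <-]]; exists v. Qed.

Lemma chromaticP X u v : chromatic X -> u \in X -> v \in X -> u.1 = v.1 -> u = v.
Proof.
move=> /forallP chX uX vX /eqP uv.
by have /implyP/(_ uX)/forallP/(_ v)/implyP/(_ vX)/implyP/(_ uv)/eqP := chX u.
Qed.

Lemma facetFI_eq X X0 : X \in FI n -> X0 \in FI n -> X0 \subset X -> X = X0.
Proof. by move=> XF X0F; apply: facet_maximal X0F (subsetP (facets_sub _) _ XF). Qed.

End Facets.

Section ProductUpdate.
Variables (n : nat) (SD : {set simplex n}) (Th : simplex n -> {set simplex n}).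
Implicit Types (X t : simplex n) (w : puW SD Th).

Lemma preSat_facet X t : X \in FI n -> preSat Th t X -> t \in Th X.
Proof.
by move=> XF /existsP[X0 /and3P[X0F tX0 X0X]]; rewrite (facetFI_eq XF X0F X0X).
Qed.

Lemma isRep_facet X t : isRep SD Th X t -> t \in Th X.
Proof. by case/and4P=> XF _ _; apply: preSat_facet. Qed.

Lemma mem_cls_facet X X1 t : X \in FI n -> X \in cls Th X1 t -> t \in Th X.
Proof. by move=> XF; rewrite inE => /and3P[_ _]; apply: preSat_facet. Qed.

Lemma world_repP w :
  exists2 X, isRep SD Th X (val w).2 & (val w).1 = cls Th X (val w).2.
Proof. by have /existsP[X /andP[rX /eqP eX]] := valP w; exists X. Qed.

Lemma world_facet w : (val w).2 \in facets SD.
Proof. by have [X /and4P[_ wF _ _] _] := world_repP w. Qed.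

Lemma puAcc_shared_vertex a w w' :
  puAcc a w w' -> exists2 q, q \in (val w).2 :&: (val w').2 & q.1 = a.
Proof. by case/existsP=> X /existsP[Y /and3P[_ _ /and4P[_ _ _ /colorsP]]]. Qed.

Hypothesis Th_facet_map : is_facet_map (SI n) SD Th.

Lemma isRep_facet_map X t : X \in FI n -> t \in Th X -> isRep SD Th X t.
Proof.
case: Th_facet_map => ThF [ThC _] XF tX; rewrite /isRep XF (subsetP (ThF X XF)) //=.
apply/andP; split; last by apply/existsP; exists X; rewrite XF tX subxx.
apply/subsetP => a; rewrite !inE /accAct /accI !setIid.
exact: (subsetP (ThC X t XF tX)).
Qed.

Lemma cls_self X t : X \in FI n -> t \in Th X -> X \in cls Th X t.
Proof.
move=> XF tX; have /and4P[_ _ alive_t preX] := isRep_facet_map XF tX.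
rewrite inE XF preX andbT; apply/forallP => a; apply/implyP => /(subsetP alive_t).
by rewrite inE /accI setIid.
Qed.

Lemma world_of_facet X t :
  X \in FI n -> t \in Th X -> exists w, val w = (cls Th X t, t).
Proof.
move=> XF tX; have wP : isWorld SD Th (cls Th X t, t).
  by apply/existsP; exists X; rewrite isRep_facet_map //= eqxx.
by exists (exist (isWorld SD Th) _ wP).
Qed.

Lemma world_of_facets Y : Y \in facets SD -> exists w, (val w).2 = Y.
Proof.
case: Th_facet_map => _ [_ ->] /bigcupP[X XF YX].
by have [w ew] := world_of_facet XF YX; exists w; rewrite ew.
Qed.

Lemma simplex_in_world Z : Z \in SD -> exists w, Z \subset (val w).2.
Proof. by move=> /facet_sup[Y /world_of_facets[w <-] ZY]; exists w. Qed.

End ProductUpdate.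

Section Protocol.
Variables (n : nat) (VP : {set vert n}) (SP : {set simplex n}).
Variable Ps : simplex n -> {set simplex n}.
Hypothesis protocol : is_protocol VP SP Ps.

Lemma puAcc_of_shared_vertex (w w' : puW SP Ps) p :
  p \in (val w).2 -> p \in (val w').2 -> puAcc p.1 w w'.
Proof.
case: protocol => _ [_ colorsI] pw pw'.
have [X rX eX] := world_repP w; have [X' rX' eX'] := world_repP w'.
have shared : p.1 \in colors ((val w).2 :&: (val w').2).
  by apply/colorsP; exists p; rewrite ?inE ?pw ?pw'.
apply/existsP; exists X; apply/existsP; exists X'.
rewrite rX rX' eX eX' !eqxx /accAct shared andbT /accI.
have /and4P[XF _ _ _] := rX; have /and4P[X'F _ _ _] := rX'.
exact: subsetP (colorsI _ _ _ _ XF X'F (isRep_facet rX) (isRep_facet rX')) _ shared.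
Qed.

End Protocol.

Section Decision.
Variables (n : nat) (VP : {set vert n}) (SP : {set simplex n}).
Variables (VO : {set vert n}) (SO : {set simplex n}).
Variables (Ps De : simplex n -> {set simplex n}).
Hypothesis protocol : is_protocol VP SP Ps.
Hypothesis task : is_task VO SO De.
Variable f : puW SP Ps -> {set puW SO De}.
Hypothesis f_acc : forall a w w', puAcc a w w' ->
  forall u u', u \in f w -> u' \in f w' -> puAcc a u u'.
Hypothesis f_sup : forall w, exists2 w', w' \in f w & (val w).1 \subset (val w').1.
Implicit Types (Z : simplex n) (w : puW SP Ps) (u : puW SO De) (p q : vert n).

Lemma task_facet_in (u : puW SO De) : (val u).2 \in SO.
Proof. exact: subsetP (facets_sub _) _ (world_facet u). Qed.

Lemma images_share_vertex w w' u u' p :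
  u \in f w -> u' \in f w' -> p \in (val w).2 -> p \in (val w').2 ->
  exists2 q, q \in (val u).2 :&: (val u').2 & q.1 = p.1.
Proof.
move=> uw uw' pw pw'.
exact/puAcc_shared_vertex/(f_acc (puAcc_of_shared_vertex protocol pw pw') uw uw').
Qed.

Lemma image_vertex_mem w w' u u' p q :
  u \in f w -> u' \in f w' -> p \in (val w).2 -> p \in (val w').2 ->
  q \in (val u).2 -> q.1 = p.1 -> q \in (val u').2.
Proof.
move=> uw uw' pw pw' qu qp.
have [r /setIP[ru ru'] rp] := images_share_vertex uw uw' pw pw'.
have [[cO _] _] := task; have [_ _ chu] := cO _ (task_facet_in u).
by rewrite (chromaticP chu qu ru) // qp rp.
Qed.

(* The default [p] is only taken on vertices lying in no facet of P. *)
Definition decision (p : vert n) : vert n :=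
  if [pick q | [exists w, exists u,
        [&& u \in f w, p \in (val w).2, q \in (val u).2 & q.1 == p.1]]] is Some q
  then q else p.

Lemma decisionP w u p : u \in f w -> p \in (val w).2 ->
  decision p \in (val u).2 /\ (decision p).1 = p.1.
Proof.
move=> uw pw; rewrite /decision; case: pickP => [q|none].
  case/existsP=> w1 /existsP[u1 /and4P[uw1 pw1 qu1 /eqP qp]].
  by rewrite (image_vertex_mem uw1 uw pw1 pw qu1 qp).
have [r /setIP[ru _] rp] := images_share_vertex uw uw pw pw.
have /negP[] := negbT (none r).
by apply/existsP; exists w; apply/existsP; exists u; rewrite uw pw ru rp eqxx.
Qed.

Lemma decision_sub w u Z : u \in f w -> Z \subset (val w).2 ->
  decision @: Z \subset (val u).2.
Proof.
move=> uw /subsetP Zw; apply/subsetP => _ /imsetP[p /Zw pw ->].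
by case: (decisionP uw pw).
Qed.

Lemma simplex_image Z :
  Z \in SP -> exists w, exists2 u, u \in f w & Z \subset (val w).2.
Proof.
case: protocol => _ [PF _] /(simplex_in_world PF)[w Zw].
by have [u uw _] := f_sup w; exists w, u.
Qed.

Lemma decision_chromatic_map : chromatic_map VP SP VO SO decision.
Proof.
have [[cP [_ vP]] _] := protocol; have [[cO [clO _]] _] := task.
split=> [v /vP /simplex_image[w [u uw]] | Z /[dup] ZS /simplex_image[w [u uw Zw]]].
  rewrite sub1set => vw; have [du ->] := decisionP uw vw; split=> //.
  by have [_ /subsetP uV _] := cO _ (task_facet_in u); apply: uV.
apply: clO (task_facet_in u) _ (decision_sub uw Zw).
by have [Z0 _ _] := cP Z ZS; rewrite imset_eq0.
Qed.

Lemma decision_task X Y : X \in FI n -> Y \in Ps X ->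
  exists2 Z, Z \in De X & decision @: Y \subset Z.
Proof.
have [_ [PF _]] := protocol; move=> XF YX.
have [w ew] := world_of_facet PF XF YX; have [u uw wu] := f_sup w.
have [X1 _ eu] := world_repP u.
exists (val u).2; last by apply: decision_sub uw _; rewrite ew.
have Xu : X \in (val u).1.
  by apply: (subsetP wu); rewrite ew; exact (cls_self PF XF YX).
by rewrite eu in Xu; apply: mem_cls_facet XF Xu.
Qed.

End Decision.

Theorem lemmaA4 (n : nat) (Hn : 1 < n)
  (VP : {set vert n}) (SP : {set simplex n}) (Ps : simplex n -> {set simplex n})
  (VO : {set vert n}) (SO : {set simplex n}) (De : simplex n -> {set simplex n}) :
  is_protocol VP SP Ps ->
  is_task VO SO De ->
  (exists f : puW SP Ps -> {set puW SO De},
     is_morphism (puAcc (Th:=Ps)) (@puLab n SP Ps)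
                 (puAcc (Th:=De)) (@puLab n SO De) f /\
     (forall w, exists2 w', w' \in f w & (val w).1 \subset (val w').1)) ->
  exists d : vert n -> vert n,
    chromatic_map VP SP VO SO d /\
    (forall X Y, X \in FI n -> Y \in Ps X ->
       exists2 Z, Z \in De X & d @: Y \subset Z).
Proof.
move=> protocol task [f [[f_acc _ _] f_sup]].
exists (decision f); split.
- exact (decision_chromatic_map protocol task f_acc f_sup).
- exact (decision_task protocol task f_acc f_sup).
Qed.
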